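(* Let $L$ be a subspace of $\bigwedge^kV$, let $1\le i<j\le n$, and suppose $L$ is monomial with respect to $e_j$, i.e. $L=\big(L\cap\bigwedge^{k}V^{(j)}\big)\oplus\big(L\cap(e_{j}\wedge\bigwedge^{k-1}V^{(j)})\big)$. Then for each $x\in\bigwedge^{k-1}V^{(j)}$ with $e_j\wedge x\in N_{j\to i}L$, it also holds that $e_i\wedge x\in N_{j\to i}L$.
   Context: $\mathbb{F}$ is a field (assumed throughout the paper, for expository purposes, to have characteristic not $2$), $V$ is an $n$-dimensional $\mathbb{F}$-vector space with a fixed basis $e_1,\dots,e_n$, and $\bigwedge V$ its exterior algebra. For $j\in[n]$, $V^{(j)}$ is the span of $\{e_h:h\neq j\}$, and $\bigwedge V^{(j)}$ is viewed as a subalgebra of $\bigwedge V$. Slow shift: for distinct $i,j\in[n]$ and nonzero $m\in\bigwedge^kV$, write uniquely $m=x'+e_j\wedge y'$ with $x'\in\bigwedge^kV^{(j)}$, $y'\in\bigwedge^{k-1}V^{(j)}$, and set $N_{j\to i}m=x'+e_i\wedge y'$ if this is nonzero, and $N_{j\to i}m=e_j\wedge y'$ otherwise (the limit as $t\to0$ of the projective action of the linear map $e_j\mapsto e_i+te_j$ fixing the other $e_h$). For a subspace $L$ of $\bigwedge^kV$, $N_{j\to i}L$ is the span of $\{N_{j\to i}m:m\in L\setminus\{0\}\}$. *)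

From HB Require Import structures.
From mathcomp Require Import all_boot all_order all_algebra.
Set Implicit Arguments. Unset Strict Implicit. Unset Printing Implicit Defensive.
Import Order.TTheory GRing.Theory.
Local Open Scope ring_scope.

(* Concrete model of the exterior algebra /\V of V = F^n with fixed basis
   e_0,...,e_(n-1) (0-indexed): an element is its coordinate vector on the
   standard basis e_S = e_{s1} /\ ... /\ e_{sk} (s1 < ... < sk), S a subset
   of 'I_n. *)
Definition ext (F : fieldType) (n : nat) := {ffun {set 'I_n} -> F^o}.

Section Ext.
Variables (F : fieldType) (n : nat).
Implicit Types (a b m x y : ext F n) (S T U : {set 'I_n}).

Definition blade S : ext F n := [ffun T : {set 'I_n} => (T == S)%:R].
Definition evec (i : 'I_n) : ext F n := blade [set i].

(* number of inversions when concatenating the increasing lists S and T *)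
Definition inv_count S T : nat := #|[set p in setX S T | (p.2 < p.1)%N]|.

Definition wedge a b : ext F n :=
  [ffun U : {set 'I_n} => \sum_(S : {set 'I_n}) \sum_(T : {set 'I_n})
     (if [disjoint S & T] && (S :|: T == U)
      then (-1) ^+ inv_count S T * a S * b T else 0)].

Definition homog (d : nat) x : Prop := forall S, x S != 0 -> #|S| = d.
(* x is in /\^(k-1) V, with /\^(-1) V = 0 when k = 0 *)
Definition homog_pred (k : nat) x : Prop := forall S, x S != 0 -> (#|S| + 1)%N = k.
(* x lies in the subalgebra /\ V^(j) *)
Definition avoids (j : 'I_n) x : Prop := forall S, x S != 0 -> j \notin S.

(* decomposition m = x' + e_j /\ y' with x', y' in /\ V^(j) *)
Definition xpart (j : 'I_n) m : ext F n := [ffun S : {set 'I_n} => if j \in S then 0 else m S].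
Definition ypart (j : 'I_n) m : ext F n :=
  [ffun T : {set 'I_n} => if j \in T then 0
             else (-1) ^+ #|[set t in T | (t < j)%N]| * m (j |: T)].

Definition slow_shift (j i : 'I_n) m : ext F n :=
  let r := xpart j m + wedge (evec i) (ypart j m) in
  if r != 0 then r else wedge (evec j) (ypart j m).

Definition in_shift (j i : 'I_n) (L : {vspace ext F n}) (v : ext F n) : Prop :=
  exists s : seq (ext F n),
    all (fun m => (m \in L) && (m != 0)) s /\ v \in <<map (slow_shift j i) s>>%VS.

Definition monomial_wrt (k : nat) (j : 'I_n) (L : {vspace ext F n}) : Prop :=
  forall m, m \in L -> exists a y,
    [/\ a \in L, homog k a & avoids j a] /\
    [/\ wedge (evec j) y \in L, homog_pred k y & avoids j y] /\
    m = a + wedge (evec j) y.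
End Ext.
Arguments blade {F n} S.
Arguments evec {F n} i.

From HB Require Import structures.
From mathcomp Require Import all_boot all_order all_algebra.
Set Implicit Arguments.
Unset Strict Implicit.
Unset Printing Implicit Defensive.
Import GRing.Theory.
Local Open Scope ring_scope.

(* The linear map x' + e_j /\ y' |-> e_i /\ y' sends e_j /\ x to e_i /\ x,
   and sends each generator N_{j->i} m into the line spanned by the x-part x'
   of m: to 0 when N_{j->i} m = x' + e_i /\ y', and to -x' when that vanishes
   and N_{j->i} m = e_j /\ y'.  By monomiality x' lies in L, and
   N_{j->i} x' = x' when x' <> 0, so the whole image lies in N_{j->i} L. *)

Lemma memv_span_linear (K : fieldType) (vT wT : vectType K)
    (f : {linear vT -> wT}) (X : seq vT) (W : {vspace wT}) v :
  {in X, forall x, f x \in W} -> v \in <<X>>%VS -> f v \in W.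
Proof.
move=> fXW vX; rewrite (coord_span (X := in_tuple X) vX) linear_sum.
apply: memv_suml => l _.
by rewrite linearZ; apply/memvZ/fXW/mem_nth.
Qed.

Section SlowShift.
Variables (F : fieldType) (n : nat).
Implicit Types (a m x y : ext F n) (i j : 'I_n) (S T U : {set 'I_n}).

Lemma wedge_is_linear a : linear (wedge a).
Proof.
move=> c u v; apply/ffunP => U; rewrite !ffunE scaler_sumr -big_split.
apply: eq_bigr => S _; rewrite scaler_sumr -big_split; apply: eq_bigr => T _.
rewrite !ffunE /=; case: ifP => _; last by rewrite scaler0 addr0.
by rewrite mulrDr mulrCA.
Qed.
HB.instance Definition _ a :=
  GRing.isLinear.Build F (ext F n) (ext F n) *:%R (wedge a) (wedge_is_linear a).

Lemma xpart_is_linear j : linear (@xpart F n j).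
Proof.
move=> c u v; apply/ffunP => S.
by rewrite !ffunE; case: ifP; rewrite ?scaler0 ?addr0.
Qed.
HB.instance Definition _ j := GRing.isLinear.Build F (ext F n) (ext F n)
  *:%R (@xpart F n j) (xpart_is_linear j).

Lemma ypart_is_linear j : linear (@ypart F n j).
Proof.
move=> c u v; apply/ffunP => T; rewrite !ffunE.
by case: ifP; rewrite ?scaler0 ?addr0 // mulrDr mulrCA.
Qed.
HB.instance Definition _ j := GRing.isLinear.Build F (ext F n) (ext F n)
  *:%R (@ypart F n j) (ypart_is_linear j).

Lemma wedge_evecE i y U : wedge (evec i) y U =
  \sum_(T : {set 'I_n}) (if [disjoint [set i] & T] && ([set i] :|: T == U)
          then (-1) ^+ inv_count [set i] T * y T else 0).
Proof.
rewrite ffunE (bigD1 [set i]) //= [X in _ + X]big1 ?addr0 => [|S /negbTE iS].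
  by apply: eq_bigr => T _; rewrite ffunE eqxx mulr1.
by apply: big1 => T _; rewrite ffunE iS mulr0 mul0r if_same.
Qed.

Lemma inv_count_set1 j T : inv_count [set j] T = #|[set t in T | (t < j)%N]|.
Proof.
have inj_pair : injective (fun t : 'I_n => (j, t)) by move=> a b [].
rewrite /inv_count -(card_imset _ inj_pair); apply: eq_card => -[a t].
rewrite !inE /=; apply/andP/imsetP => [[/andP[/eqP-> tT] ltj]|[t']].
  by exists t; rewrite ?inE ?tT.
by rewrite inE => /andP[tT ltj] [-> ->]; rewrite eqxx tT.
Qed.

Lemma xpart_id j a : avoids j a -> xpart j a = a.
Proof.
move=> aj; apply/ffunP => S; rewrite ffunE; case: ifP => // jS.
by apply/esym/eqP; apply: contraTT jS => /aj.
Qed.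

Lemma avoids_xpart j a : avoids j (xpart j a).
Proof. by move=> S; rewrite ffunE; case: ifP; rewrite ?eqxx. Qed.

Lemma avoids_ypart j a : avoids j (ypart j a).
Proof. by move=> S; rewrite ffunE; case: ifP; rewrite ?eqxx. Qed.

Lemma ypart_avoids j a : avoids j a -> ypart j a = 0.
Proof.
move=> aj; apply/ffunP => T; rewrite !ffunE; case: ifP => // _.
by have [->|/aj] := eqVneq (a (j |: T)) 0; rewrite ?mulr0 ?setU11.
Qed.

Lemma xpart_wedge_evec j y : xpart j (wedge (evec j) y) = 0.
Proof.
apply/ffunP => U; rewrite [LHS]ffunE [RHS]ffunE; case: ifP => // jU.
rewrite wedge_evecE; apply: big1 => T _; case: ifP => // /andP[_ /eqP UE].
by rewrite -UE setU11 in jU.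
Qed.

Lemma ypart_wedge_evec j y : avoids j y -> ypart j (wedge (evec j) y) = y.
Proof.
move=> yj; apply/ffunP => T; rewrite [LHS]ffunE; case: ifP => jT.
  by apply/esym/eqP; apply: contraTT jT => /yj.
rewrite wedge_evecE (bigD1 T) //= big1 ?addr0 => [|T' T'T].
  rewrite disjoints1 jT eqxx inv_count_set1 mulrA -exprD addnn -mul2n exprM.
  by rewrite sqrrN !expr1n mul1r.
case: ifP => // /andP[_ /eqP UE]; have [->|/yj jT'] := eqVneq (y T') 0.
  by rewrite mulr0.
by rewrite -(setU1K jT') -(setU1K (negbT jT)) UE eqxx in T'T.
Qed.

Lemma ypart_wedge_evec_neq i j y : i != j -> avoids j y ->
  ypart j (wedge (evec i) y) = 0.
Proof.
move=> ij yj; apply/ffunP => T.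
rewrite [LHS]ffunE [RHS]ffunE; case: ifP => // _.
rewrite wedge_evecE big1 ?mulr0 // => T' _; case: ifP => // /andP[_ /eqP UE].
have jT' : j \in T'.
  by move: (setU11 j T); rewrite -UE in_setU in_set1 eq_sym (negbTE ij).
by have [->|/yj] := eqVneq (y T') 0; rewrite ?mulr0 ?jT'.
Qed.

Lemma xpart_monomial k j L m : monomial_wrt k j L -> m \in L -> xpart j m \in L.
Proof.
move=> monoL /monoL[a [y [[aL _ aj] [_ ->]]]].
by rewrite linearD /= xpart_wedge_evec addr0 xpart_id.
Qed.

Lemma slow_shift_id i j a : avoids j a -> a != 0 -> slow_shift j i a = a.
Proof.
move=> aj a0.
by rewrite /slow_shift (ypart_avoids aj) linear0 addr0 (xpart_id aj) a0.
Qed.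

Lemma wedge_ypart_slow_shift i j m : i != j ->
  wedge (evec i) (ypart j (slow_shift j i m)) \in <[xpart j m]>%VS.
Proof.
move=> ij; rewrite /slow_shift; case: ifP => [_|/negbFE/eqP r0].
  rewrite linearD /= (ypart_avoids (@avoids_xpart j m)).
  rewrite (ypart_wedge_evec_neq ij (@avoids_ypart j m)).
  by rewrite add0r linear0 mem0v.
rewrite (ypart_wedge_evec (@avoids_ypart j m)).
suff -> : wedge (evec i) (ypart j m) = - xpart j m by rewrite memvN memv_line.
by apply/eqP; rewrite -addr_eq0 addrC r0.
Qed.
End SlowShift.

Theorem corollary3p6 (F : fieldType) (n k : nat) (i j : 'I_n)
  (L : {vspace ext F n}) :
  (2%N \notin [pchar F]) ->
  (forall m, m \in L -> homog k m) ->
  (i < j)%N ->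
  monomial_wrt k j L ->
  forall x : ext F n, homog_pred k x -> avoids j x ->
  in_shift j i L (wedge (evec j) x) ->
  in_shift j i L (wedge (evec i) x).
Proof.
move=> _ _ ltij monoL x _ xj [s [sL jxs]].
have ij : i != j by rewrite neq_ltn ltij.
pose s' := s ++ [seq xpart j m | m <- s & xpart j m != 0].
have s'L : all (fun m => (m \in L) && (m != 0)) s'.
  rewrite all_cat sL; apply/allP => _ /mapP[m + ->].
  rewrite mem_filter => /andP[m0 ms].
  by rewrite m0 andbT (xpart_monomial monoL) //; case/andP: (allP sL m ms).
have xpart_shift m : m \in s -> xpart j m \in <<map (slow_shift j i) s'>>%VS.
  move=> ms; have [->|m0] := eqVneq (xpart j m) 0; first exact: mem0v.
  rewrite -(slow_shift_id i (@avoids_xpart _ _ j m) m0); apply/memv_span/map_f.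
  by rewrite mem_cat map_f ?orbT // mem_filter m0.
exists s'; split => //; rewrite -(ypart_wedge_evec xj).
apply: (memv_span_linear (f := wedge (evec i) \o @ypart F n j) _ jxs).
move=> _ /mapP[m ms ->].
by apply: subvP (wedge_ypart_slow_shift m ij); rewrite -memvE xpart_shift.
Qed.
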